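(* Let $X$ be a discretely geodesic metric space with $\beta$-stable intervals. For all $x,y,z\in X$ there exists a point $v\in I(x,y)$ with $d(z,v)\le\beta\cdot 2(x\mid y)_z$.
   Context: $(x\mid y)_z=\frac12(d(z,x)+d(z,y)-d(x,y))$. $X$ is discretely geodesic if $d$ is integer valued and any $x,y$ are joined by an isometric embedding $\gamma\colon\{0,\dots,d(x,y)\}\to X$ with $\gamma(0)=x,\gamma(d(x,y))=y$. $I(x,y)=\{u: d(x,u)+d(u,y)=d(x,y)\}$. $\beta$-stable intervals: for all $x,y,y'$ with $d(y,y')=1$, the Hausdorff distance between $I(x,y)$ and $I(x,y')$ is at most $\beta$. *)

From Stdlib Require Import Reals.
Open Scope R_scope.

Definition is_nat_metric {X : Type} (d : X -> X -> nat) : Prop :=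
  (forall x y, d x y = 0%nat <-> x = y) /\
  (forall x y, d x y = d y x) /\
  (forall x y z, (d x z <= d x y + d y z)%nat).

Definition discretely_geodesic {X : Type} (d : X -> X -> nat) : Prop :=
  is_nat_metric d /\
  forall x y, exists gamma : nat -> X,
    gamma 0%nat = x /\ gamma (d x y) = y /\
    (forall i j, (i <= d x y)%nat -> (j <= d x y)%nat ->
       INR (d (gamma i) (gamma j)) = Rabs (INR i - INR j)).

Definition interval {X : Type} (d : X -> X -> nat) (x y : X) (u : X) : Prop :=
  (d x u + d u y = d x y)%nat.

(* Hausdorff distance between A and B is at most beta. Since distances are
   integers, each infimum is attained, so this is exactly "d_H(A,B) <= beta". *)
Definition hausdorff_le {X : Type} (d : X -> X -> nat) (A B : X -> Prop) (beta : R) : Prop :=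
  (forall a, A a -> exists b, B b /\ INR (d a b) <= beta) /\
  (forall b, B b -> exists a, A a /\ INR (d a b) <= beta).

Definition stable_intervals {X : Type} (d : X -> X -> nat) (beta : R) : Prop :=
  forall x y y', d y y' = 1%nat ->
    hausdorff_le d (interval d x y) (interval d x y') beta.

Definition gromov {X : Type} (d : X -> X -> nat) (x y z : X) : R :=
  (INR (d z x) + INR (d z y) - INR (d x y)) / 2.

(* Walk along a geodesic from z to y, carrying a point v of I(x, w) for the current point w.
   When w moves one step away from x, v stays in I(x, w); otherwise the step is paid for by
   beta-stability, costing at most beta in d(z, v). The cost-free steps are exactly those along
   which d(x, w) increases, so at most d(z, y) + d(x, z) - d(x, y) = 2(x|y)_z steps are paid. *)
From Stdlib Require Import Reals Lra Lia.
Open Scope R_scope.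

Section StableIntervals.

Variables (X : Type) (d : X -> X -> nat) (beta : R).
Hypothesis Hmetric : is_nat_metric d.

Let dist_self (x : X) : d x x = 0%nat.
Proof. now apply (proj1 Hmetric). Qed.

Let dist_sym (x y : X) : d x y = d y x.
Proof. exact (proj1 (proj2 Hmetric) x y). Qed.

Let dist_triangle (x y z : X) : (d x z <= d x y + d y z)%nat.
Proof. exact (proj2 (proj2 Hmetric) x y z). Qed.

Lemma interval_right (x y : X) : interval d x y y.
Proof. unfold interval. rewrite dist_self. lia. Qed.

Lemma interval_left (x y : X) : interval d x y x.
Proof. unfold interval. rewrite dist_self. lia. Qed.

Lemma interval_extend (x w w' v : X) :
  d w w' = 1%nat -> d x w' = S (d x w) -> interval d x w v -> interval d x w' v.
Proof.
  unfold interval. intros Hww' Hxw' Hv.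
  pose proof (dist_triangle x v w'). pose proof (dist_triangle v w w'). lia.
Qed.

Hypothesis Hstab : stable_intervals d beta.

Lemma stable_beta_nonneg (y y' : X) : d y y' = 1%nat -> 0 <= beta.
Proof.
  intros Hyy'.
  destruct (proj1 (Hstab y y y' Hyy') y (interval_left y y)) as [b [_ Hb]].
  pose proof (pos_INR (d y b)). lra.
Qed.

Lemma interval_follow_step (x w w' v : X) :
  d w w' = 1%nat -> interval d x w v ->
  exists v' c, interval d x w' v' /\ INR (d v v') <= beta * INR c /\
               (c + d x w' <= S (d x w))%nat.
Proof.
  intros Hww' Hv.
  destruct (Nat.eq_dec (d x w') (S (d x w))) as [Hfar | Hnear].
  - exists v, 0%nat. rewrite dist_self. simpl.
    split; [now apply (interval_extend x w w') | split; [lra | lia]].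
  - destruct (proj1 (Hstab x w w' Hww') v Hv) as [v' [Hv' Hvv']].
    exists v', 1%nat. simpl. split; [exact Hv' | split; [lra |]].
    pose proof (dist_triangle x w w'). lia.
Qed.

Lemma interval_follow_path (x : X) (p : nat -> X) (n : nat) :
  (forall i, (i < n)%nat -> d (p i) (p (S i)) = 1%nat) ->
  exists v c, interval d x (p n) v /\ INR (d (p 0%nat) v) <= beta * INR c /\
              (c + d x (p n) <= n + d x (p 0%nat))%nat.
Proof.
  induction n as [|n IH]; intros Hpath.
  - exists (p 0%nat), 0%nat. rewrite dist_self. simpl.
    split; [apply interval_right | split; [lra | lia]].
  - destruct IH as [v [c [Hv [Hzv Hc]]]]; [intros i Hi; apply Hpath; lia |].
    destruct (interval_follow_step x (p n) (p (S n)) v (Hpath n (Nat.lt_succ_diag_r n)) Hv)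
      as [v' [c' [Hv' [Hvv' Hc']]]].
    exists v', (c + c')%nat. split; [exact Hv' | split; [| lia]].
    pose proof (le_INR _ _ (dist_triangle (p 0%nat) v v')) as Htri.
    rewrite plus_INR in *. lra.
Qed.

End StableIntervals.

Lemma geodesic_path_adjacent (X : Type) (d : X -> X -> nat) (g : nat -> X) (n : nat) :
  (forall i j, (i <= n)%nat -> (j <= n)%nat ->
     INR (d (g i) (g j)) = Rabs (INR i - INR j)) ->
  forall i, (i < n)%nat -> d (g i) (g (S i)) = 1%nat.
Proof.
  intros Hiso i Hi. apply INR_eq.
  rewrite (Hiso i (S i)) by lia. rewrite S_INR, Rabs_minus_sym.
  replace (INR i + 1 - INR i) with 1 by ring. rewrite Rabs_pos_eq by lra. reflexivity.
Qed.

Theorem lemma5p11 (X : Type) (d : X -> X -> nat) (beta : R)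
  (Hgeo : discretely_geodesic d) (Hstab : stable_intervals d beta) :
  forall x y z : X, exists v : X,
    interval d x y v /\ INR (d z v) <= beta * (2 * gromov d x y z).
Proof.
  intros x y z.
  destruct Hgeo as [Hmetric Hgeod].
  pose proof Hmetric as [_ [Hsym Htri]].
  destruct (Hgeod z y) as [g [Hg0 [Hgn Hiso]]].
  pose proof (geodesic_path_adjacent X d g (d z y) Hiso) as Hadj.
  assert (Hgromov : 2 * gromov d x y z = INR (d z y + d x z - d x y)).
  { pose proof (Htri x z y). unfold gromov.
    rewrite minus_INR, plus_INR, (Hsym z x) by lia. lra. }
  destruct (interval_follow_path X d beta Hmetric Hstab x g (d z y) Hadj)
    as [v [c [Hv [Hzv Hc]]]].
  rewrite Hg0, Hgn in *.
  exists v. split; [exact Hv |].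
  (* [beta] is known to be nonnegative only once some pair of points is at distance one. *)
  destruct (d z y) as [| n] eqn:Ezy.
  - pose proof (Htri x y z). rewrite (Hsym y z), Ezy in *.
    rewrite Hgromov. replace (0 + d x z - d x y)%nat with c by lia. exact Hzv.
  - pose proof (stable_beta_nonneg X d beta Hmetric Hstab _ _ (Hadj 0%nat ltac:(lia))).
    rewrite Hgromov. eapply Rle_trans; [exact Hzv |].
    apply Rmult_le_compat_l; [assumption | apply le_INR; lia].
Qed.
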